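(* Let $\Gamma=\{\rho_1<\rho_2<\rho_3<\cdots\}$ be an Arf numerical semigroup, with multiplicity $e=\rho_2$ and conductor $c=\rho_r$ (so $r$ is the index with $\rho_r=c$). Then: \begin{itemize} \item If $e=2$, then for every $m\in\Gamma$ with $2\le m\le c+1$ we have $\delta^2_\Gamma(m)=3$ if $m=2$ and $\delta^2_\Gamma(m)=4$ if $m>2$. \item If $e>2$, then: \begin{enumerate} \item for every $m\in\Gamma$ with $e\le m\le c+e-3$, $\delta^2_\Gamma(m)=3$; \item if $\rho_3=2\rho_2$, then $\delta^2_\Gamma(c+e-2)=3$ if $\rho_{r-1}<c-2$ and $\delta^2_\Gamma(c+e-2)=4$ if $\rho_{r-1}=c-2$; moreover $\delta^2_\Gamma(c+e-1)=4$; \item if $\rho_3<2\rho_2$, then $\delta^2_\Gamma(c+e-2)=3$ if $\rho_{r-1}<c-2$, $\delta^2_\Gamma(c+e-2)=4$ if $\rho_{r-1}=c-2$ and $r=3$, and $\delta^2_\Gamma(c+e-2)=5$ if $\rho_{r-1}=c-2$ and $r>3$; moreover $\delta^2_\Gamma(c+e-1)=4$ if $r=2$ and $\delta^2_\Gamma(c+e-1)=5$ if $r>2$. \end{enumerate} \end{itemize}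
   Context: A numerical semigroup is a subset $\Gamma\subseteq\mathbb N$ containing $0$, closed under addition, with $\mathbb N\setminus\Gamma$ finite. Write its elements in increasing order $0=\rho_1<\rho_2<\cdots$. The multiplicity is $\rho_2$, the conductor is the least integer $c$ with $c+\mathbb N\subseteq\Gamma$. $\Gamma$ is Arf if $\rho_i+\rho_j-\rho_k\in\Gamma$ for all $i\ge j\ge k$. For $x\in\mathbb Z$, $D_\Gamma(x)=\{s\in\Gamma: x-s\in\Gamma\}$, and $D_\Gamma(x_1,\dots,x_k)=D_\Gamma(x_1)\cup\cdots\cup D_\Gamma(x_k)$. The second Feng-Rao distance of an integer $m$ is $\delta^2_\Gamma(m)=\min\{|D_\Gamma(m_1,m_2)| : m\le m_1<m_2,\ m_1,m_2\in\Gamma\}$. *)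

From mathcomp Require Import all_boot.
Set Implicit Arguments. Unset Strict Implicit. Unset Printing Implicit Defensive.

(* Finiteness of the complement is witnessed by an
   explicit bound [ns_bound] beyond which every natural number is in the set
   (this bound is auxiliary data; all notions below are independent of it). *)
Record numsg := NumSg {
  ns_mem : pred nat;
  ns_bound : nat;
  ns_0 : ns_mem 0;
  ns_add : forall x y, ns_mem x -> ns_mem y -> ns_mem (x + y);
  ns_cofin : forall n, ns_bound <= n -> ns_mem n
}.

(* rho G i : the i-th element (1-indexed) of G in increasing order,
   rho G 1 = 0 < rho G 2 < ...  The first (ns_bound G + i) naturals contain
   at least i elements of G, so the value does not depend on the bound. *)
Definition rho (G : numsg) (i : nat) : nat :=
  nth 0 (filter (ns_mem G) (iota 0 (ns_bound G + i))) i.-1.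

(* conductor: least c with c + N included in G. *)
Definition conductor (G : numsg) : nat :=
  find (fun c => all (ns_mem G) (iota c (ns_bound G - c))) (iota 0 (ns_bound G).+1).

Definition Arf (G : numsg) : Prop :=
  forall i j k, 1 <= k -> k <= j -> j <= i -> ns_mem G (rho G i + rho G j - rho G k).

(* s \in D_G(x) (for x a natural number; for s in G, x - s in G forces s <= x). *)
Definition inD (G : numsg) (x s : nat) : bool :=
  [&& s <= x, ns_mem G s & ns_mem G (x - s)].

(* |D_G(x1, x2)| = |D_G(x1) u D_G(x2)|  (all its elements are <= max x1 x2). *)
Definition cardD2 (G : numsg) (x1 x2 : nat) : nat :=
  count (fun s => inD G x1 s || inD G x2 s) (iota 0 (maxn x1 x2).+1).

(* IsDelta2 G m d  <->  delta^2_G(m) = d, i.e. d is the minimum of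
   |D_G(m1,m2)| over m <= m1 < m2 with m1, m2 in G. *)
Definition IsDelta2 (G : numsg) (m d : nat) : Prop :=
  (exists m1 m2, [/\ m <= m1, m1 < m2, ns_mem G m1, ns_mem G m2 & cardD2 G m1 m2 = d])
  /\ (forall m1 m2, m <= m1 -> m1 < m2 -> ns_mem G m1 -> ns_mem G m2 -> d <= cardD2 G m1 m2).

From mathcomp Require Import all_boot zify.

(* Write e = rho_2, q = rho_3 and c for the conductor, so that c - 1 is a gap.
   For x in the semigroup, D(x) contains 0 and x, and it contains e as soon as
   x - e is an element.  Conversely, if x = s + (x - s) with s, x - s >= z for
   an element z, the Arf property makes x - z an element; hence D(x) = {0, x}
   when x - e is a gap, and D(x) is contained in {0, e, x - e, x} when x - q is
   a gap.  For x = c + e - 1 and x = c + q - 1 these gaps are c - 1, which pins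
   down |D(m1, m2)| for explicit pairs near c + e; the elements 0, e, m1 - e,
   m1, m2 (or q) that are forced into D(m1, m2) give the matching lower bounds.
   When e = 2 every even number is an element, and a parity argument puts e in
   D(m1, m2) whenever 3 <= m1 < m2. *)

Set Implicit Arguments. Unset Strict Implicit. Unset Printing Implicit Defensive.

Section NumericalSemigroup.
Variable G : numsg.

Local Notation e := (rho G 2).
Local Notation q := (rho G 3).
Local Notation c := (conductor G).

Definition elems_below n := filter (ns_mem G) (iota 0 n).

Lemma elems_belowD m n :
  elems_below (m + n) = elems_below m ++ filter (ns_mem G) (iota m n).
Proof. by rewrite /elems_below iotaD filter_cat. Qed.

Lemma size_elems_below i : i <= size (elems_below (ns_bound G + i)).
Proof.
rewrite elems_belowD size_cat size_filter (@eq_in_count _ _ predT).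
  by rewrite count_predT size_iota leq_addl.
by move=> y; rewrite mem_iota => /andP[/ns_cofin ->].
Qed.

Lemma rhoE i n : 0 < i -> ns_bound G + i <= n -> rho G i = nth 0 (elems_below n) i.-1.
Proof.
move=> i_gt0 /subnKC <-; rewrite elems_belowD nth_cat.
by rewrite (leq_trans _ (size_elems_below i)) // prednK.
Qed.

Lemma rho_mem i : ns_mem G (rho G i).
Proof.
rewrite /rho; set s := filter _ _; have [lt_i | ge_i] := ltnP i.-1 (size s).
  by have := mem_nth 0 lt_i; rewrite mem_filter => /andP[].
by rewrite nth_default // ns_0.
Qed.

Lemma rho1 : rho G 1 = 0.
Proof. by rewrite /rho addn1 /= ns_0. Qed.

Lemma rho_lt i j : 0 < i -> i < j -> rho G i < rho G j.
Proof.
move=> i_gt0 lt_ij; have j_gt0 := ltn_trans i_gt0 lt_ij.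
rewrite !(@rhoE _ (ns_bound G + j)) ?leq_add2l ?(ltnW lt_ij) //.
have sorted_elems : sorted ltn (elems_below (ns_bound G + j)).
  exact/(sorted_filter ltn_trans)/iota_ltn_sorted.
have size_j := size_elems_below j.
by apply: (sorted_ltn_nth ltn_trans) => //; rewrite ?inE; lia.
Qed.

Lemma rho_leq i j : 0 < i -> i <= j -> rho G i <= rho G j.
Proof.
by move=> i_gt0; rewrite leq_eqVlt => /predU1P[-> // | /(rho_lt i_gt0)/ltnW].
Qed.

Lemma rho_surj x : ns_mem G x -> exists k, rho G k.+1 = x.
Proof.
move=> Gx; exists (count (ns_mem G) (iota 0 x)).
rewrite (@rhoE _ (x + (ns_bound G).+1)) //; last first.
  by have := count_size (ns_mem G) (iota 0 x); rewrite size_iota; lia.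
by rewrite elems_belowD nth_cat size_filter ltnn subnn /= Gx.
Qed.

Lemma rhoS_min i x : ns_mem G x -> rho G i < x -> rho G i.+1 <= x.
Proof.
move=> /rho_surj[k <-] lt_ik; have [-> | i_gt0] := posnP i; first by rewrite rho1.
rewrite rho_leq // ltnS leqNgt; apply: contraTN lt_ik => lt_ki.
by rewrite -leqNgt rho_leq.
Qed.

Lemma leq_rhoS i j : (rho G i.+1 <= rho G j.+1) = (i <= j).
Proof.
apply/idP/idP => [| le_ij]; last exact: rho_leq.
by apply: contraTT; rewrite -!ltnNge => lt_ji; apply: rho_lt.
Qed.

Lemma mult_gt0 : 0 < e.
Proof. by have := @rho_lt 1 2 isT isT; rewrite rho1. Qed.

Lemma mult_min x : ns_mem G x -> 0 < x -> e <= x.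
Proof. by move=> Gx x_gt0; apply: rhoS_min Gx _; rewrite rho1. Qed.

Lemma mult_lt_rho3 : e < q.
Proof. exact: rho_lt. Qed.

Lemma rho3_min x : ns_mem G x -> e < x -> q <= x.
Proof. exact: rhoS_min. Qed.

Lemma has_conductor :
  has (fun k => all (ns_mem G) (iota k (ns_bound G - k))) (iota 0 (ns_bound G).+1).
Proof. by apply/hasP; exists (ns_bound G); rewrite ?subnn // mem_iota add0n ltnS andTb. Qed.

Lemma conductor_le_bound : c <= ns_bound G.
Proof. by rewrite -ltnS -[X in _ < X](size_iota 0) -has_find has_conductor. Qed.

Lemma conductor_mem y : c <= y -> ns_mem G y.
Proof.
move=> le_cy; have [/ns_cofin // | lt_y] := leqP (ns_bound G) y.
have /allP := nth_find 0 has_conductor; rewrite -/(conductor G).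
rewrite nth_iota ?ltnS ?conductor_le_bound // add0n; apply.
by rewrite mem_iota; lia.
Qed.

Lemma conductor_min k : (forall y, k <= y -> ns_mem G y) -> c <= k.
Proof.
move=> Gk; rewrite leqNgt; apply/negP => lt_kc.
have := before_find 0 lt_kc; rewrite nth_iota; last first.
  by have := conductor_le_bound; lia.
by rewrite add0n => /negP; apply; apply/allP => y; rewrite mem_iota => /andP[/Gk].
Qed.

Lemma conductor_pred_notin y : y.+1 = c -> ~~ ns_mem G y.
Proof.
move=> yc; apply/negP => Gy; suff : c <= y by lia.
apply: conductor_min => z; rewrite leq_eqVlt => /predU1P[<- // | lt_yz].
by apply: conductor_mem; lia.
Qed.

Lemma mult_le_conductor : 1 < e -> e <= c.
Proof.
move=> e_gt1; apply: mult_min; first exact: conductor_mem.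
rewrite lt0n; apply/eqP => c0.
have G1 : ns_mem G 1 by apply: conductor_mem; rewrite c0.
by have := mult_min G1 isT; lia.
Qed.

Lemma mem_muln k a : ns_mem G a -> ns_mem G (k * a).
Proof. by move=> Ga; elim: k => [|k IH]; rewrite ?mul0n ?ns_0 // mulSn ns_add. Qed.

Lemma inD_le x s : inD G x s -> s <= x.
Proof. by case/and3P. Qed.

Lemma inD0 x : ns_mem G x -> inD G x 0.
Proof. by move=> Gx; rewrite /inD ns_0 subn0 Gx. Qed.

Lemma inD_id x : ns_mem G x -> inD G x x.
Proof. by move=> Gx; rewrite /inD leqnn subnn ns_0 Gx. Qed.

Lemma inD_interior x s : inD G x s -> s != 0 -> s != x -> e <= s /\ e <= x - s.
Proof. by case/and3P=> le_sx Gs Gxs s0 sx; split; apply: mult_min => //; lia. Qed.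

Lemma inD_mult s : inD G e s = (s \in [:: 0; e]).
Proof.
rewrite !inE; apply/idP/idP => [Ds | /orP[]/eqP->]; last 2 first.
- exact/inD0/rho_mem.
- exact/inD_id/rho_mem.
apply/negPn/negP; rewrite negb_or => /andP[s0 se].
by have := inD_le Ds; have [] := inD_interior Ds s0 se; lia.
Qed.

Lemma inD_mult_double s : inD G (2 * e) s = (s \in [:: 0; e; 2 * e]).
Proof.
have G2e : ns_mem G (2 * e) by rewrite mem_muln ?rho_mem.
rewrite !inE; apply/idP/idP => [Ds | /or3P[]/eqP->]; last 3 first.
- exact: inD0.
- by rewrite /inD rho_mem mul2n -addnn addnK rho_mem leq_addr.
- exact: inD_id.
have [-> // | s0] := eqVneq s 0; have [-> | s2e] := eqVneq s (2 * e).
  by rewrite orbT.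
by have := mult_gt0; have [] := inD_interior Ds s0 s2e; lia.
Qed.

Lemma cardD2C x y : cardD2 G x y = cardD2 G y x.
Proof. by rewrite /cardD2 maxnC; apply: eq_count => s; rewrite orbC. Qed.

Lemma cardD2_ge x y L : uniq L -> (forall s, s \in L -> inD G x s || inD G y s) ->
  size L <= cardD2 G x y.
Proof.
move=> uniqL DL; rewrite /cardD2 -size_filter; apply: uniq_leq_size => // s /DL Ds.
by rewrite mem_filter Ds mem_iota; case/orP: Ds => /inD_le; lia.
Qed.

Lemma cardD2_eq x y L : uniq L -> (forall s, inD G x s || inD G y s = (s \in L)) ->
  cardD2 G x y = size L.
Proof.
move=> uniqL DL; rewrite /cardD2 -size_filter; apply/perm_size/uniq_perm => //.
  exact/filter_uniq/iota_uniq.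
move=> s; rewrite mem_filter mem_iota -DL /=; apply/andP/idP => [[] // | Ds].
by split=> //; case/orP: Ds => /inD_le; lia.
Qed.

Lemma cardD2_mult_double : cardD2 G e (2 * e) = 3.
Proof.
apply: (cardD2_eq (L := [:: 0; e; 2 * e])) => [|s];
  rewrite ?inD_mult ?inD_mult_double /= !inE; have := mult_gt0; lia.
Qed.

Lemma cardD2_ge3 x y : 0 < x -> x < y -> ns_mem G x -> ns_mem G y -> 3 <= cardD2 G x y.
Proof.
move=> x_gt0 lt_xy Gx Gy; apply: (cardD2_ge (L := [:: 0; x; y])).
  by rewrite /= !inE; lia.
by move=> s; rewrite !inE => /or3P[]/eqP->; rewrite ?inD0 ?inD_id ?orbT.
Qed.

Lemma cardD2_ge4 x y : e < x -> x < y -> ns_mem G x -> ns_mem G y ->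
  ns_mem G (x - e) || ns_mem G (y - e) -> 4 <= cardD2 G x y.
Proof.
move=> lt_ex lt_xy Gx Gy Gsub; apply: (cardD2_ge (L := [:: 0; e; x; y])).
  by rewrite /= !inE; have := mult_gt0; lia.
move=> s; rewrite !inE => /or4P[]/eqP->; rewrite ?inD0 ?inD_id ?orbT //.
by rewrite /inD rho_mem (ltnW lt_ex) (ltnW (ltn_trans lt_ex lt_xy)).
Qed.

Lemma cardD2_ge5 x y : e < x - e -> ns_mem G (x - e) -> ns_mem G y -> e < y ->
  y != x - e -> y != x -> 5 <= cardD2 G x y.
Proof.
move=> lt_e_xe Gxe Gy lt_ey y_xe y_x; have e_gt0 := mult_gt0.
have Gx : ns_mem G x by rewrite -(subnK (_ : e <= x)) ?ns_add ?rho_mem //; lia.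
apply: (cardD2_ge (L := [:: 0; e; x - e; x; y])); first by rewrite /= !inE; lia.
move=> s; rewrite !inE => /orP[/eqP-> | /or4P[]/eqP->]; rewrite ?inD0 ?inD_id ?orbT //.
  by rewrite /inD rho_mem Gxe andbT; apply/orP; left; lia.
by rewrite /inD leq_subr Gxe subKn ?rho_mem //; lia.
Qed.

Lemma mult2_even x : e = 2 -> ~~ odd x -> ns_mem G x.
Proof.
move=> e2 even_x; have G2 : ns_mem G 2 by rewrite -e2 rho_mem.
by rewrite -[x]odd_double_half (negbTE even_x) add0n -muln2 mem_muln.
Qed.

Lemma cardD2_mult2_ge4 x y : e = 2 -> 2 < x -> x < y -> ns_mem G x -> ns_mem G y ->
  4 <= cardD2 G x y.
Proof.
move=> e2 x_gt2 lt_xy Gx Gy; apply: cardD2_ge4; rewrite ?e2 //.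
apply: contraT; rewrite negb_or => /andP[gx gy].
have odd_x2 : odd (x - 2) by apply: contraNT gx; exact: mult2_even.
have odd_y2 : odd (y - 2) by apply: contraNT gy; exact: mult2_even.
have : ns_mem G (x + (y - 2 - x)) by rewrite ns_add // mult2_even //; lia.
by rewrite (_ : x + _ = y - 2) ?(negbTE gy) //; lia.
Qed.

Lemma IsDelta2_mult : IsDelta2 G e 3.
Proof.
have e_gt0 := mult_gt0.
split=> [|x y le_ex lt_xy Gx Gy]; last by apply: cardD2_ge3; lia.
by exists e, (2 * e); split; rewrite ?cardD2_mult_double ?mem_muln ?rho_mem //; lia.
Qed.

Hypothesis e_gt1 : 1 < e.

Lemma cardD2_ge4_ce1 x y : c + e - 1 <= x -> x < y -> ns_mem G x -> ns_mem G y ->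
  4 <= cardD2 G x y.
Proof.
move=> le_x lt_xy Gx Gy; have le_ec := mult_le_conductor e_gt1.
by apply: cardD2_ge4 => //; [lia | apply/orP; right; apply: conductor_mem; lia].
Qed.

Lemma cardD2_ge4_ce2 x y : 2 < c -> ns_mem G (c - 2) -> c + e - 2 <= x -> x < y ->
  ns_mem G x -> ns_mem G y -> 4 <= cardD2 G x y.
Proof.
move=> c_gt2 Gc2 le_x lt_xy Gx Gy; have [x_ce2 | x_ce2] := eqVneq x (c + e - 2).
  by apply: cardD2_ge4 => //; [lia | rewrite (_ : x - e = c - 2) ?Gc2 //; lia].
by apply: cardD2_ge4_ce1 => //; lia.
Qed.

Lemma cardD2_ge5_ce1 x y : q < 2 * e -> e < c -> c + e - 1 <= x -> x < y ->
  ns_mem G x -> ns_mem G y -> 5 <= cardD2 G x y.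
Proof.
move=> lt_q lt_ec le_x lt_xy Gx Gy; have lt_eq := mult_lt_rho3.
have [y_ex | y_ex] := eqVneq (y - e) x; last first.
  by rewrite cardD2C; apply: cardD2_ge5 => //; try lia; apply: conductor_mem; lia.
apply: (cardD2_ge (L := [:: 0; e; q; x; y])); first by rewrite /= !inE; lia.
move=> s; rewrite !inE => /orP[/eqP-> | /or4P[]/eqP->]; rewrite ?inD0 ?inD_id ?orbT //;
  apply/orP; right; apply/and3P; split; rewrite ?rho_mem ?y_ex //; try lia.
by apply: conductor_mem; lia.
Qed.

Hypothesis arfG : Arf G.

Lemma Arf_sub x y z : ns_mem G x -> ns_mem G y -> ns_mem G z -> z <= x -> z <= y ->
  ns_mem G (x + y - z).
Proof.
wlog le_yx : x y / y <= x => [hwlog | Gx Gy Gz le_zx le_zy].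
  by have [/hwlog // | /ltnW /hwlog] := leqP y x; rewrite addnC => hw *; apply: hw.
have [i xE] := rho_surj Gx; have [j yE] := rho_surj Gy; have [k zE] := rho_surj Gz.
subst x y z; rewrite !leq_rhoS in le_yx le_zx le_zy.
exact: arfG.
Qed.

Lemma Arf_conductor_le y : ns_mem G y -> ns_mem G y.+1 -> c <= y.
Proof.
move=> Gy Gy1; apply: conductor_min.
suff Gyk k : ns_mem G (y + k) && ns_mem G (y + k).+1.
  by move=> z le_yz; rewrite -(subnKC le_yz); case/andP: (Gyk (z - y)).
elim: k => [|k /andP[Gk Gk1]]; first by rewrite addn0 Gy Gy1.
rewrite addnS Gk1 /=; move: (Arf_sub Gk1 Gk1 Gk (leqnSn _) (leqnSn _)).
by rewrite (_ : _ - _ = (y + k).+2) //; lia.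
Qed.

Lemma Arf_inD_sub z x s : ns_mem G z -> inD G x s -> z <= s -> z <= x - s ->
  ns_mem G (x - z).
Proof.
move=> Gz /and3P[le_sx Gs Gxs] le_zs le_zxs.
by have := Arf_sub Gs Gxs Gz le_zs le_zxs; rewrite subnKC.
Qed.

Lemma inD_gap x : ns_mem G x -> ~~ ns_mem G (x - e) ->
  forall s, inD G x s = (s \in [:: 0; x]).
Proof.
move=> Gx gap s; rewrite !inE; apply/idP/idP => [Ds | /orP[]/eqP->]; last 2 first.
- exact: inD0.
- exact: inD_id.
apply: contraNT gap; rewrite negb_or => /andP[s0 sx].
have [le_es le_exs] := inD_interior Ds s0 sx.
exact: Arf_inD_sub (rho_mem 2) Ds le_es le_exs.
Qed.

Lemma inD_pair x : e <= x -> ns_mem G (x - e) -> ~~ ns_mem G (x - q) ->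
  forall s, inD G x s = (s \in [:: 0; e; x - e; x]).
Proof.
move=> le_ex Gxe gap s.
have Gx : ns_mem G x by rewrite -(subnK le_ex) ns_add ?rho_mem.
rewrite !inE; apply/idP/idP => [Ds | /or4P[]/eqP->]; last 4 first.
- exact: inD0.
- by rewrite /inD le_ex rho_mem Gxe.
- by rewrite /inD leq_subr Gxe subKn // rho_mem.
- exact: inD_id.
apply: contraNT gap; rewrite !negb_or => /and4P[s0 se sxe sx].
have [le_es le_exs] := inD_interior Ds s0 sx; have /and3P[le_sx Gs Gxs] := Ds.
by apply: Arf_inD_sub (rho_mem 3) Ds _ _; apply: rho3_min => //; lia.
Qed.

Lemma inD_ce1 s : inD G (c + e - 1) s = (s \in [:: 0; c + e - 1]).
Proof.
have le_ec := mult_le_conductor e_gt1.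
by apply: inD_gap; [apply: conductor_mem | apply: conductor_pred_notin]; lia.
Qed.

Lemma inD_cq1 s :
  inD G (c + q - 1) s = (s \in [:: 0; e; c + q - 1 - e; c + q - 1]).
Proof.
have le_ec := mult_le_conductor e_gt1; have lt_eq := mult_lt_rho3.
by apply: inD_pair; [lia | apply: conductor_mem | apply: conductor_pred_notin]; lia.
Qed.

Lemma cardD2_conductor_gap x : c <= x -> x < c + e - 1 -> ~~ ns_mem G (x - e) ->
  cardD2 G x (c + e - 1) = 3.
Proof.
move=> le_cx lt_x gap; have le_ec := mult_le_conductor e_gt1.
have Dx := inD_gap (conductor_mem le_cx) gap.
apply: (cardD2_eq (L := [:: 0; x; c + e - 1])) => [|s];
  rewrite ?Dx ?inD_ce1 /= !inE; lia.
Qed.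

Lemma cardD2_rho3_double : q = 2 * e -> cardD2 G (c + e - 1) (c + q - 1) = 4.
Proof.
move=> qE; have le_ec := mult_le_conductor e_gt1.
apply: (cardD2_eq (L := [:: 0; e; c + e - 1; c + q - 1])) => [|s];
  rewrite ?inD_ce1 ?inD_cq1 /= !inE; lia.
Qed.

Lemma cardD2_rho3_lt : q < 2 * e -> e < c -> cardD2 G (c + e - 1) (c + q - 1) = 5.
Proof.
move=> lt_q lt_ec; have lt_eq := mult_lt_rho3.
apply: (cardD2_eq (L := [:: 0; e; c + q - 1 - e; c + e - 1; c + q - 1])) => [|s];
  rewrite ?inD_ce1 ?inD_cq1 /= !inE; lia.
Qed.

Lemma cardD2_conductor_mult : c = e -> cardD2 G (c + e - 1) (2 * e) = 4.
Proof.
move=> ce; apply: (cardD2_eq (L := [:: 0; e; c + e - 1; 2 * e])) => [|s];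
  rewrite ?inD_ce1 ?inD_mult_double /= !inE; lia.
Qed.

Lemma cardD2_conductor_mult2 : c = e + 2 -> cardD2 G (2 * e) (c + e - 1) = 4.
Proof.
move=> ce; apply: (cardD2_eq (L := [:: 0; e; 2 * e; c + e - 1])) => [|s];
  rewrite ?inD_ce1 ?inD_mult_double /= !inE; lia.
Qed.

Lemma mult2_cases : e = 2 -> q = 4 \/ c = 2.
Proof.
move=> e2; have G2 : ns_mem G 2 by rewrite -e2 rho_mem.
have le_q4 : q <= 4 by apply: rho3_min; [exact: (ns_add G2 G2) | rewrite e2].
have := mult_lt_rho3; have := mult_le_conductor e_gt1; rewrite e2 => le_2c lt_2q.
have [q3 | q_ne3] := eqVneq q 3; last by left; lia.
have G3 : ns_mem G 3 by rewrite -q3 rho_mem.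
by right; have := Arf_conductor_le G2 G3; lia.
Qed.

Lemma IsDelta2_mult2 m : e = 2 -> 2 < m -> m <= c + 1 -> IsDelta2 G m 4.
Proof.
move=> e2 m_gt2 le_m; split=> [|x y le_mx lt_xy Gx Gy]; last first.
  by apply: cardD2_mult2_ge4 => //; lia.
have le_ec := mult_le_conductor e_gt1; have lt_eq := mult_lt_rho3.
have [q4 | c2] := mult2_cases e2.
  exists (c + e - 1), (c + q - 1); rewrite cardD2_rho3_double; last by rewrite q4 e2.
  by split; rewrite ?conductor_mem //; lia.
exists (c + e - 1), (2 * e); rewrite cardD2_conductor_mult; last by rewrite c2 e2.
by split; rewrite ?conductor_mem ?mem_muln ?rho_mem //; lia.
Qed.

Lemma IsDelta2_below m : 2 < e -> e <= m -> m <= c + e - 3 -> IsDelta2 G m 3.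
Proof.
move=> e_gt2 le_em le_m; have le_ec := mult_le_conductor e_gt1.
split=> [|x y le_mx lt_xy Gx Gy]; last by apply: cardD2_ge3; lia.
have [x [le_cx lt_x le_mx gap]] :
    exists x, [/\ c <= x, x < c + e - 1, m <= x & ~~ ns_mem G (x - e)].
  have [Gc3 | gap3] := boolP (ns_mem G (c - 3)); last first.
    exists (c + e - 3); rewrite (_ : c + e - 3 - e = c - 3); last by lia.
    by split=> //; lia.
  exists (c + e - 2); rewrite (_ : c + e - 2 - e = (c - 3).+1); last by lia.
  split; [lia | lia | lia | apply/negP => /(Arf_conductor_le Gc3); lia].
exists x, (c + e - 1); rewrite cardD2_conductor_gap //.
by split; rewrite ?conductor_mem //; lia.
Qed.

Lemma IsDelta2_ce2_notin : ~~ ns_mem G (c - 2) -> IsDelta2 G (c + e - 2) 3.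
Proof.
move=> gap; have le_ec := mult_le_conductor e_gt1.
split=> [|x y le_x lt_xy Gx Gy]; last by apply: cardD2_ge3; lia.
exists (c + e - 2), (c + e - 1); rewrite cardD2_conductor_gap; try lia.
  by split; rewrite ?conductor_mem //; lia.
by rewrite (_ : _ - e = c - 2) //; lia.
Qed.

Lemma IsDelta2_ce2_rho3_double : 2 < c -> q = 2 * e -> ns_mem G (c - 2) ->
  IsDelta2 G (c + e - 2) 4.
Proof.
move=> c_gt2 qE Gc2; split=> [|x y]; last exact: cardD2_ge4_ce2.
exists (c + e - 1), (c + q - 1); rewrite cardD2_rho3_double //.
by split; rewrite ?conductor_mem //; lia.
Qed.

Lemma IsDelta2_ce1_rho3_double : q = 2 * e -> IsDelta2 G (c + e - 1) 4.
Proof.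
move=> qE; split=> [|x y]; last exact: cardD2_ge4_ce1.
have le_ec := mult_le_conductor e_gt1.
exists (c + e - 1), (c + q - 1); rewrite cardD2_rho3_double //.
by split; rewrite ?conductor_mem //; lia.
Qed.

Lemma IsDelta2_ce2_conductor_mult2 : c = e + 2 -> IsDelta2 G (c + e - 2) 4.
Proof.
move=> ce; split=> [|x y]; last by apply: cardD2_ge4_ce2; rewrite ?ce ?addnK ?rho_mem //; lia.
exists (2 * e), (c + e - 1); rewrite cardD2_conductor_mult2 //.
by split; rewrite ?conductor_mem ?mem_muln ?rho_mem //; lia.
Qed.

Lemma IsDelta2_ce2_rho3_lt : q < 2 * e -> e < c - 2 -> ns_mem G (c - 2) ->
  IsDelta2 G (c + e - 2) 5.
Proof.
move=> lt_q lt_ec Gc2; have lt_eq := mult_lt_rho3.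
split=> [|x y le_x lt_xy Gx Gy].
  exists (c + e - 1), (c + q - 1); rewrite cardD2_rho3_lt; try lia.
  by split; rewrite ?conductor_mem //; lia.
have [x_ce2 | x_ce2] := eqVneq x (c + e - 2); last by apply: cardD2_ge5_ce1 => //; lia.
have xE : x - e = c - 2 by lia.
by apply: cardD2_ge5; rewrite ?xE //; lia.
Qed.

Lemma IsDelta2_ce1_conductor_mult : c = e -> IsDelta2 G (c + e - 1) 4.
Proof.
move=> ce; split=> [|x y]; last exact: cardD2_ge4_ce1.
exists (c + e - 1), (2 * e); rewrite cardD2_conductor_mult //.
by split; rewrite ?conductor_mem ?mem_muln ?rho_mem //; lia.
Qed.

Lemma IsDelta2_ce1_rho3_lt : q < 2 * e -> e < c -> IsDelta2 G (c + e - 1) 5.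
Proof.
move=> lt_q lt_ec; split=> [|x y]; last exact: cardD2_ge5_ce1.
exists (c + e - 1), (c + q - 1); rewrite cardD2_rho3_lt //.
by split; rewrite ?conductor_mem //; have := mult_lt_rho3; lia.
Qed.

End NumericalSemigroup.

Theorem theorem4p12 (G : numsg) (r : nat) :
  Arf G -> 0 < r -> rho G r = conductor G ->
  let e := rho G 2 in
  let c := conductor G in
  (e = 2 ->
     forall m, ns_mem G m -> 2 <= m -> m <= c + 1 ->
       IsDelta2 G m (if m == 2 then 3 else 4)) /\
  (2 < e ->
     (forall m, ns_mem G m -> e <= m -> m <= c + e - 3 -> IsDelta2 G m 3) /\
     (rho G 3 = 2 * e ->
        (rho G r.-1 < c - 2 -> IsDelta2 G (c + e - 2) 3) /\
        (rho G r.-1 = c - 2 -> IsDelta2 G (c + e - 2) 4) /\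
        IsDelta2 G (c + e - 1) 4) /\
     (rho G 3 < 2 * e ->
        (rho G r.-1 < c - 2 -> IsDelta2 G (c + e - 2) 3) /\
        (rho G r.-1 = c - 2 -> r = 3 -> IsDelta2 G (c + e - 2) 4) /\
        (rho G r.-1 = c - 2 -> 3 < r -> IsDelta2 G (c + e - 2) 5) /\
        (r = 2 -> IsDelta2 G (c + e - 1) 4) /\
        (2 < r -> IsDelta2 G (c + e - 1) 5))).
Proof.
move=> arfG r_gt0 rho_r; cbv zeta.
split=> [e2 m _ m_ge2 m_le | e_gt2].
  have [-> | m_ne2] := eqVneq m 2; first by have := IsDelta2_mult G; rewrite e2; apply.
  by apply: IsDelta2_mult2; rewrite ?e2 //; lia.
have e_gt1 := ltnW e_gt2; have c_gt2 := leq_trans e_gt2 (mult_le_conductor e_gt1).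
have c2_notin : rho G r.-1 < conductor G - 2 -> ~~ ns_mem G (conductor G - 2).
  by move=> lt_r; apply/negP => /rhoS_min /(_ lt_r); rewrite prednK // rho_r; lia.
have c2_mem : rho G r.-1 = conductor G - 2 -> ns_mem G (conductor G - 2).
  by move <-; exact: rho_mem.
split; first by move=> m _; exact: IsDelta2_below.
split=> [q2e | q_lt]; split; try by move/c2_notin; exact: IsDelta2_ce2_notin.
  by split; [move/c2_mem; exact: IsDelta2_ce2_rho3_double | exact: IsDelta2_ce1_rho3_double].
split=> [c2 r3 | ].
  by apply: IsDelta2_ce2_conductor_mult2 => //; move: c2; rewrite r3 /=; lia.
split=> [c2 r_gt3 | ].
  by apply: IsDelta2_ce2_rho3_lt (c2_mem c2) => //; rewrite -c2 rho_lt //; lia.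
split=> [r2 | r_gt2].
  by apply: IsDelta2_ce1_conductor_mult => //; rewrite -rho_r r2.
by apply: IsDelta2_ce1_rho3_lt; rewrite -?rho_r ?rho_lt.
Qed.
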